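(* Fix $d\in[0,D]$ and consider the problem \[ \min_{\{E_n\},\{t_n\}} \ \sum_{n=1}^N E_n\left(1+\frac{h_n}{g_n}\right) \] subject to \[ d\le \sum_{n=1}^N t_n W\ln\left(1+\frac{E_n h_n}{t_n\sigma^2 W}\right),\qquad 2\sum_{n=1}^N t_n\le T-\frac{Ld}{f_B},\qquad E_n\ge 0,\ t_n\ge 0\ \ \forall n. \] At an optimal solution of this problem, both the data constraint and the time constraint hold with equality: \[ d=\sum_{n=1}^N t_n W\ln\left(1+\frac{E_n h_n}{t_n\sigma^2W}\right),\qquad 2\sum_{n=1}^N t_n = T-\frac{Ld}{f_B}. \]
   Context: All parameters $N, h_n, g_n, W, \sigma^2, L, D, T, f_B$ are given positive constants, and $n$ ranges over $\{1,\dots,N\}$. The term $t_n W\ln\left(1+\frac{E_n h_n}{t_n\sigma^2W}\right)$ is interpreted as $0$ when $t_n=0$. *)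

(* R : realType, indices n : 'I_N (i.e. n = 1..N shifted to 0..N-1). *)
From HB Require Import structures.
From mathcomp Require Import all_boot all_order all_algebra.
From mathcomp Require Import all_classical all_reals all_analysis.
Set Implicit Arguments. Unset Strict Implicit. Unset Printing Implicit Defensive.
Import Order.TTheory GRing.Theory Num.Theory.
Local Open Scope ring_scope.

Section Problem.
Variables (R : realType) (N : nat) (h g : 'I_N -> R) (W sigma2 L T fB d : R).

Definition rate_term (E t : 'I_N -> R) (n : 'I_N) : R :=
  if t n == 0 then 0
  else t n * W * ln (1 + E n * h n / (t n * sigma2 * W)).

Definition total_rate (E t : 'I_N -> R) : R := \sum_(n < N) rate_term E t n.

Definition energy_cost (E : 'I_N -> R) : R := \sum_(n < N) E n * (1 + h n / g n).

Definition feasible (E t : 'I_N -> R) : Prop :=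
  [/\ d <= total_rate E t,
      2 * (\sum_(n < N) t n) <= T - L * d / fB
    & forall n, 0 <= E n /\ 0 <= t n].

Definition optimal (E t : 'I_N -> R) : Prop :=
  feasible E t /\
  forall E' t', feasible E' t' -> energy_cost E <= energy_cost E'.

Definition constraints_tight (E t : 'I_N -> R) : Prop :=
  d = total_rate E t /\ 2 * (\sum_(n < N) t n) = T - L * d / fB.

End Problem.

(** Both constraints are tight by two perturbation arguments. If the rate exceeded
    [d > 0], scaling all energies and durations by [d / rate < 1] would keep the
    solution feasible (the rate is positively homogeneous) and strictly lower a
    nonzero cost. If the time constraint had slack, lengthening a slot that carries
    positive rate would strictly increase the rate at the same cost, since the
    perspective [t ln (1 + a / t)] of [ln (1 + x)] is strictly increasing in [t];
    this yields an optimal solution with non-tight rate constraint, which the first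
    argument excludes. For [d = 0] the optimum is attained at zero energy, and any
    schedule filling the time budget is optimal and tight. *)

From HB Require Import structures.
From mathcomp Require Import all_boot all_order all_algebra.
From mathcomp Require Import all_classical all_reals all_analysis.
From mathcomp Require Import ring lra.

Set Implicit Arguments.
Unset Strict Implicit.
Unset Printing Implicit Defensive.
Import Order.TTheory GRing.Theory Num.Theory.
Local Open Scope ring_scope.


Section LnBounds.
Variable R : realType.
Implicit Types x b c a t : R.

Lemma lt_ln1Dx x : -1 < x -> x != 0 -> ln (1 + x) < x.
Proof.
move=> x_gtN1 x_neq0.
rewrite -[ltRHS]expRK ltr_ln ?posrE ?expR_gt0 ?expR_gt1Dx //; lra.
Qed.

Lemma ge_ln1Dx x : -1 < x -> x / (1 + x) <= ln (1 + x).
Proof.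
move=> x_gtN1; have x1_gt0 : 0 < 1 + x by lra.
have /le_ln1Dx : -1 < - (x / (1 + x)) by rewrite ltrN2 ltr_pdivrMr //; lra.
have -> : 1 - x / (1 + x) = (1 + x)^-1 by field; rewrite lt0r_neq0.
rewrite lnV ?posrE //; lra.
Qed.

(* [ln (1 + x) / x] is strictly decreasing on [x > 0]. *)
Lemma ltr_ln1Dx_mul c b : 0 < c -> c < b -> c * ln (1 + b) < b * ln (1 + c).
Proof.
move=> c_gt0 cb; have c1_gt0 : 0 < 1 + c by lra.
set y := (b - c) / (1 + c).
have y_gt0 : 0 < y by rewrite divr_gt0 // subr_gt0.
have ln1Db : ln (1 + b) = ln (1 + c) + ln (1 + y).
  rewrite -lnM ?posrE ?addr_gt0 //.
  by congr ln; rewrite /y; field; rewrite lt0r_neq0.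
have y_le : y <= (b - c) / c * ln (1 + c).
  have -> : y = (b - c) / c * (c / (1 + c)) by rewrite /y; field; rewrite !lt0r_neq0.
  by rewrite ler_pM2l ?ge_ln1Dx ?divr_gt0 ?subr_gt0 //; lra.
have ln1Dy : ln (1 + y) < y by apply: lt_ln1Dx; [lra | exact: lt0r_neq0].
have -> : b * ln (1 + c) = c * (ln (1 + c) + (b - c) / c * ln (1 + c)).
  by field; rewrite lt0r_neq0.
by rewrite ltr_pM2l // ln1Db; lra.
Qed.

Lemma lt_perspective_ln1D a t (t' : R) : 0 < a -> 0 < t -> t < t' ->
  t * ln (1 + a / t) < t' * ln (1 + a / t').
Proof.
move=> a_gt0 t_gt0 tt'; have t'_gt0 : 0 < t' by apply: lt_trans tt'.
have div_lt : a / t' < a / t by rewrite ltr_pM2l // ltf_pV2 // posrE.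
have k_gt0 : 0 < t * t' / a by rewrite divr_gt0 // mulr_gt0.
have -> : t * ln (1 + a / t) = t * t' / a * (a / t' * ln (1 + a / t)).
  by field; rewrite !lt0r_neq0.
have -> : t' * ln (1 + a / t') = t * t' / a * (a / t * ln (1 + a / t')).
  by field; rewrite !lt0r_neq0.
by rewrite ltr_pM2l // ltr_ln1Dx_mul // divr_gt0.
Qed.

End LnBounds.

Lemma sum_raise (V : nmodType) (N : nat) (t : 'I_N -> V) (n0 : 'I_N) (del : V) :
  \sum_(n < N) (if n == n0 then t n + del else t n) = \sum_(n < N) t n + del.
Proof.
rewrite (bigD1 n0) //= eqxx [in RHS](bigD1 n0) //= [in RHS]addrAC.
by congr (_ + _); apply: eq_bigr => n /negbTE ->.
Qed.

Section Rate.
Variables (R : realType) (N : nat) (h : 'I_N -> R) (W sigma2 : R).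
Hypotheses (h_gt0 : forall n, 0 < h n) (W_gt0 : 0 < W) (sigma2_gt0 : 0 < sigma2).
Implicit Types (E t : 'I_N -> R) (n : 'I_N).

Lemma total_rate_eq0 E t : (forall n, E n = 0) -> total_rate h W sigma2 E t = 0.
Proof.
move=> E0; rewrite /total_rate big1 // => n _.
by rewrite /rate_term E0 !mul0r addr0 ln1 mulr0 if_same.
Qed.

Lemma rate_termZ (lam : R) E t n : lam != 0 ->
  rate_term h W sigma2 (fun i => lam * E i) (fun i => lam * t i) n =
  lam * rate_term h W sigma2 E t n.
Proof.
move=> lam_neq0; rewrite /rate_term mulf_eq0 (negbTE lam_neq0) /=.
case: eqP => [_ | _]; first by rewrite mulr0.
by rewrite -!mulrA invfM !(mulrCA _ lam^-1) mulKf.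
Qed.

Lemma total_rateZ (lam : R) E t : lam != 0 ->
  total_rate h W sigma2 (fun i => lam * E i) (fun i => lam * t i) =
  lam * total_rate h W sigma2 E t.
Proof.
by move=> lam_neq0; rewrite /total_rate mulr_sumr; apply: eq_bigr => n _; rewrite rate_termZ.
Qed.

Lemma rate_term_neq0 E t n : rate_term h W sigma2 E t n != 0 -> t n != 0 /\ E n != 0.
Proof.
rewrite /rate_term; have [_ | _] /= := eqVneq (t n) 0; first by rewrite eqxx.
have [-> | //] := eqVneq (E n) 0.
by rewrite !mul0r addr0 ln1 mulr0 eqxx.
Qed.

Lemma rate_term_lt E t t' n : 0 < E n -> 0 < t n -> t n < t' n ->
  rate_term h W sigma2 E t n < rate_term h W sigma2 E t' n.
Proof.
move=> En_gt0 tn_gt0 tt'; have t'n_gt0 : 0 < t' n by apply: lt_trans tt'.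
rewrite /rate_term !gt_eqF // !(mulrAC _ W) ltr_pM2r //.
have a_gt0 : 0 < E n * h n / (sigma2 * W) by rewrite divr_gt0 ?mulr_gt0.
have div_scale u : 0 < u -> E n * h n / (u * sigma2 * W) = E n * h n / (sigma2 * W) / u.
  by move=> u_gt0; field; rewrite !lt0r_neq0.
by rewrite !div_scale // lt_perspective_ln1D.
Qed.

Lemma total_rate_raise_lt E t n0 del : 0 < E n0 -> 0 < t n0 -> 0 < del ->
  total_rate h W sigma2 E t <
  total_rate h W sigma2 E (fun n => if n == n0 then t n + del else t n).
Proof.
move=> En0_gt0 tn0_gt0 del_gt0.
set t' := fun n => _.
rewrite /total_rate (bigD1 n0) //= [ltRHS](bigD1 n0) //=.
have -> : \sum_(n < N | n != n0) rate_term h W sigma2 E t' n =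
          \sum_(n < N | n != n0) rate_term h W sigma2 E t n.
  by apply: eq_bigr => n /negbTE n_neq; rewrite /rate_term /t' n_neq.
by rewrite ltrD2r rate_term_lt // /t' eqxx ltrDl.
Qed.

End Rate.

Section Optimality.
Variables (R : realType) (N : nat) (h g : 'I_N -> R) (W sigma2 L T fB d : R).
Hypotheses (h_gt0 : forall n, 0 < h n) (g_gt0 : forall n, 0 < g n).
Hypotheses (W_gt0 : 0 < W) (sigma2_gt0 : 0 < sigma2).
Implicit Types (E t : 'I_N -> R) (n : 'I_N).

Lemma energy_costZ (lam : R) E :
  energy_cost h g (fun n => lam * E n) = lam * energy_cost h g E.
Proof. by rewrite /energy_cost mulr_sumr; apply: eq_bigr => n _; rewrite mulrA. Qed.

Lemma energy_weight_gt0 n : 0 < 1 + h n / g n.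
Proof. by rewrite addr_gt0 ?divr_gt0. Qed.

Lemma energy_term_ge0 E n : 0 <= E n -> 0 <= E n * (1 + h n / g n).
Proof. by move=> En_ge0; rewrite mulr_ge0 // ltW // energy_weight_gt0. Qed.

Lemma energy_cost_ge0 E : (forall n, 0 <= E n) -> 0 <= energy_cost h g E.
Proof. by move=> E_ge0; apply: sumr_ge0 => n _; apply: energy_term_ge0. Qed.

Lemma energy_cost_eq0 E : (forall n, 0 <= E n) ->
  energy_cost h g E = 0 -> forall n, E n = 0.
Proof.
move=> E_ge0 cost0 n.
have term_ge0 i : true -> 0 <= E i * (1 + h i / g i) by move=> _; apply: energy_term_ge0.
have /eqP := psumr_eq0P term_ge0 cost0 (i := n) isT.
by rewrite mulf_eq0 (gt_eqF (energy_weight_gt0 n)) orbF => /eqP.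
Qed.

Lemma optimal_rate_tight E t : 0 < d ->
  optimal h g W sigma2 L T fB d E t -> total_rate h W sigma2 E t = d.
Proof.
move=> d_gt0 [[rate_ge time_le Et_ge0] E_min].
have E_ge0 n : 0 <= E n by have [] := Et_ge0 n.
apply/eqP; rewrite eq_le rate_ge andbT leNgt; apply/negP => rate_gt.
set r := total_rate h W sigma2 E t in rate_ge rate_gt.
have r_gt0 : 0 < r by apply: lt_trans rate_gt.
set lam := d / r.
have lam_gt0 : 0 < lam by rewrite divr_gt0.
have lam_lt1 : lam < 1 by rewrite ltr_pdivrMr // mul1r.
have scaled_feasible :
    feasible h W sigma2 L T fB d (fun n => lam * E n) (fun n => lam * t n).
  split.
  - by rewrite total_rateZ ?gt_eqF // divfK ?gt_eqF.
  - have sum_t_ge0 : 0 <= \sum_(n < N) t n by apply: sumr_ge0 => n _; have [] := Et_ge0 n.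
    apply: le_trans time_le; rewrite -mulr_sumr mulrCA.
    by rewrite ler_piMl ?mulr_ge0 // ltW.
  - move=> n; have [En_ge0 tn_ge0] := Et_ge0 n.
    by split; apply: mulr_ge0 => //; exact: ltW.
have := E_min _ _ scaled_feasible; rewrite energy_costZ => cost_le.
have cost0 : energy_cost h g E = 0.
  have cost_ge0 := energy_cost_ge0 E_ge0.
  by apply: le_anti; rewrite cost_ge0 andbT; nra.
have E0 := energy_cost_eq0 E_ge0 cost0.
by move: r_gt0; rewrite /r total_rate_eq0 // ltxx.
Qed.

Lemma optimal_time_tight E t : 0 < d ->
  optimal h g W sigma2 L T fB d E t -> 2 * (\sum_(n < N) t n) = T - L * d / fB.
Proof.
move=> d_gt0 opt; have rate_eq := optimal_rate_tight d_gt0 opt.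
case: opt => [[_ time_le Et_ge0] E_min].
apply/eqP; rewrite eq_le time_le /= leNgt; apply/negP => slack.
have [n0 rate_n0_neq0] : exists n0, rate_term h W sigma2 E t n0 != 0.
  apply/existsP; apply: contraTT d_gt0 => /existsPn rate0.
  by rewrite -rate_eq /total_rate big1 ?ltxx // => n _; apply/eqP/negPn/rate0.
have [tn0_gt0 En0_gt0] : 0 < t n0 /\ 0 < E n0.
  have [tn0_neq0 En0_neq0] := rate_term_neq0 rate_n0_neq0.
  by have [En0_ge0 tn0_ge0] := Et_ge0 n0; rewrite !lt0r tn0_neq0 En0_neq0.
set del := (T - L * d / fB - 2 * \sum_(n < N) t n) / 2.
have del_gt0 : 0 < del by rewrite divr_gt0 // subr_gt0.
set t' := fun n => if n == n0 then t n + del else t n.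
have t'_feasible : feasible h W sigma2 L T fB d E t'.
  split.
  - by rewrite -[X in X <= _]rate_eq ltW // total_rate_raise_lt.
  - by rewrite /t' sum_raise /del; lra.
  - move=> n; have [En_ge0 tn_ge0] := Et_ge0 n; split => //.
    by rewrite /t'; case: eqP => // _; rewrite addr_ge0 // ltW.
have := total_rate_raise_lt h_gt0 W_gt0 sigma2_gt0 En0_gt0 tn0_gt0 del_gt0.
by rewrite rate_eq -/t' (optimal_rate_tight d_gt0 (conj t'_feasible E_min)) ltxx.
Qed.

Lemma zero_demand_tight_optimum : (0 < N)%N -> 0 <= T ->
  exists E t, optimal h g W sigma2 L T fB 0 E t /\
              constraints_tight h W sigma2 L T fB 0 E t.
Proof.
move=> N_gt0 T_ge0; have N_neq0 : N%:R != 0 :> R by rewrite pnatr_eq0 -lt0n.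
set t := fun _ : 'I_N => T / (2 * N%:R).
have time_eq : 2 * (\sum_(n < N) t n) = T - L * 0 / fB.
  by rewrite sumr_const card_ord mulr0 mul0r subr0 -mulr_natr /t; field.
have rate0 : total_rate h W sigma2 (fun _ => 0) t = 0 by exact: total_rate_eq0.
exists (fun _ => 0), t; split; last by split.
split; first split.
- by rewrite rate0.
- by rewrite time_eq.
- by move=> n; split => //; rewrite divr_ge0 ?mulr_ge0 ?ler0n.
- move=> E' t' [_ _ Et'_ge0]; rewrite /energy_cost big1 => [|n _]; last by rewrite mul0r.
  by apply: energy_cost_ge0 => n; have [] := Et'_ge0 n.
Qed.

End Optimality.

Theorem lemma3 (R : realType) (N : nat) (h g : 'I_N -> R)
  (W sigma2 L D T fB d : R) :
  (0 < N)%N -> (forall n, 0 < h n) -> (forall n, 0 < g n) ->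
  0 < W -> 0 < sigma2 -> 0 < L -> 0 < D -> 0 < T -> 0 < fB ->
  0 <= d -> d <= D ->
  forall E t : 'I_N -> R,
  optimal h g W sigma2 L T fB d E t ->
  (0 < d -> constraints_tight h W sigma2 L T fB d E t) /\
  (exists E' t' : 'I_N -> R,
     optimal h g W sigma2 L T fB d E' t' /\
     constraints_tight h W sigma2 L T fB d E' t').
Proof.
move=> N_gt0 h_gt0 g_gt0 W_gt0 sigma2_gt0 _ _ T_gt0 _ d_ge0 _ E t opt.
have tight : 0 < d -> constraints_tight h W sigma2 L T fB d E t.
  move=> d_gt0; split; first by rewrite (optimal_rate_tight h_gt0 g_gt0 d_gt0 opt).
  exact: (optimal_time_tight h_gt0 g_gt0 W_gt0 sigma2_gt0 d_gt0 opt).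
split=> //; move: d_ge0; rewrite le_eqVlt => /predU1P[<- | d_gt0].
- exact: zero_demand_tight_optimum (ltW T_gt0).
- by exists E, t; split=> //; apply: tight.
Qed.
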